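(* Let $Q$ be a quantale, $M$ a $Q$-module and $\mathcal{F},\mathcal{G}\in\operatorname{mF}(Q)$. If both $\mathcal{F}$ and $\mathcal{F}+\mathcal{G}$ are localizable over $M$, then $\mathcal{G}$ is localizable over the $Q$-module $M_\mathcal{F}$, and the map $M_{\mathcal{F}+\mathcal{G}}\to (M_\mathcal{F})_\mathcal{G}$, $\overline{x}\mapsto\overline{\overline{x}}$, is a well-defined isomorphism of $Q$-modules.
   Context: A quantale is a poset $Q$ in which every nonempty subset $S$ has a join $\sum S$ (binary joins written $a+b$; no bottom element is required), with a top element $1$ and a commutative, associative multiplication with unit $1$ satisfying $a\cdot\sum_{i\in I}b_i=\sum_{i\in I}ab_i$ for every nonempty $I$. A $Q$-module is a poset $M$ with all nonempty joins and an action $Q\times M\to M$ which is associative, has $1$ acting as the identity, and distributes over nonempty joins in each variable. A Q-premodule is the same except $M$ is only required to have binary joins and distributivity over finite nonempty joins. A multiplicative filter (m-filter) of $Q$ is a subset $\mathcal{F}\subseteq Q$ with $1\in\mathcal{F}$, upward closed and closed under multiplication; $\operatorname{mF}(Q)$ is the set of m-filters; $\mathcal{F}+\mathcal{G}$ is the smallest m-filter containing $\mathcal{F}\cup\mathcal{G}$. Localization: for $a,b\in M$ write $a\preceq^1_\mathcal{F} b$ if there are families $(a_i)_{i\in I}$ in $M$ and $(s_i)_{i\in I}$ in $\mathcal{F}$ with $a\le\sum_i a_i$ and $s_ia_i\le b$ for all $i$; for $n\ge1$, $a\preceq^n_\mathcal{F} b$ means there are $c_1,\dots,c_{n-1}\in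 M$ with $a\preceq^1_\mathcal{F}c_1\preceq^1_\mathcal{F}\cdots\preceq^1_\mathcal{F}c_{n-1}\preceq^1_\mathcal{F}b$; $a\preceq_\mathcal{F}b$ means $a\preceq^n_\mathcal{F}b$ for some $n$. This is a preorder; $M_\mathcal{F}$ is the quotient by $a\sim b\iff a\preceq_\mathcal{F}b\preceq_\mathcal{F}a$, with class $\overline a$ and order $\overline a\le\overline b\iff a\preceq_\mathcal{F}b$; it is a $Q$-premodule with $\overline a+\overline b=\overline{a+b}$, $q\overline a=\overline{qa}$. $\mathcal{F}$ is localizable over $M$ if for each $b\in M$ there is $n_b\in\mathbb{N}$ such that $a\preceq_\mathcal{F}b$ implies $a\preceq^{n_b}_\mathcal{F}b$ for all $a\in M$; then $M_\mathcal{F}$ is a $Q$-module with $\sum_i\overline{a_i}=\overline{\sum_ia_i}$ and $q\overline a=\overline{qa}$. *)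

From Stdlib Require Import IndefiniteDescription.

Set Implicit Arguments.
Unset Strict Implicit.

Record QStruct := mkQStruct {
  Qc   :> Type;
  qle  : Qc -> Qc -> Prop;
  qsup : (Qc -> Prop) -> Qc;
  qmul : Qc -> Qc -> Qc;
  qone : Qc
}.
Arguments qle : clear implicits.
Arguments qsup : clear implicits.
Arguments qmul : clear implicits.
Arguments qone : clear implicits.

Definition nonempty {T : Type} (S : T -> Prop) : Prop := exists x, S x.
Definition image {T U : Type} (f : T -> U) (S : T -> Prop) : U -> Prop :=
  fun y => exists x, S x /\ y = f x.

Definition is_partial_order {T : Type} (le : T -> T -> Prop) : Prop :=
  (forall x, le x x) /\
  (forall x y, le x y -> le y x -> x = y) /\
  (forall x y z, le x y -> le y z -> le x z).

Definition is_lub {T : Type} (le : T -> T -> Prop) (S : T -> Prop) (s : T) : Prop :=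
  (forall x, S x -> le x s) /\ (forall u, (forall x, S x -> le x u) -> le s u).

Definition is_quantale (Q : QStruct) : Prop :=
  is_partial_order (qle Q) /\
  (forall S : Q -> Prop, nonempty S -> is_lub (qle Q) S (qsup Q S)) /\
  (forall a : Q, qle Q a (qone Q)) /\
  (forall a b : Q, qmul Q a b = qmul Q b a) /\
  (forall a b c : Q, qmul Q a (qmul Q b c) = qmul Q (qmul Q a b) c) /\
  (forall a : Q, qmul Q (qone Q) a = a) /\
  (forall (a : Q) (S : Q -> Prop), nonempty S ->
     qmul Q a (qsup Q S) = qsup Q (image (qmul Q a) S)).

Record MStruct (Q : QStruct) := mkMStruct {
  Mc   :> Type;
  mle  : Mc -> Mc -> Prop;
  msup : (Mc -> Prop) -> Mc;
  act  : Q -> Mc -> Mc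
}.
Arguments mle {Q} m _ _ : rename.
Arguments msup {Q} m _ : rename.
Arguments act {Q} m _ _ : rename.

Definition is_module (Q : QStruct) (M : MStruct Q) : Prop :=
  is_partial_order (mle M) /\
  (forall S : M -> Prop, nonempty S -> is_lub (mle M) S (msup M S)) /\
  (forall (p q : Q) (m : M), act M p (act M q m) = act M (qmul Q p q) m) /\
  (forall m : M, act M (qone Q) m = m) /\
  (forall (S : Q -> Prop) (m : M), nonempty S ->
     act M (qsup Q S) m = msup M (image (fun s => act M s m) S)) /\
  (forall (q : Q) (T : M -> Prop), nonempty T ->
     act M q (msup M T) = msup M (image (act M q) T)).

Definition mfilter (Q : QStruct) (F : Q -> Prop) : Prop :=
  F (qone Q) /\
  (forall a b : Q, F a -> qle Q a b -> F b) /\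
  (forall a b : Q, F a -> F b -> F (qmul Q a b)).
Arguments mfilter : clear implicits.

Definition mfilter_sum (Q : QStruct) (F G : Q -> Prop) : Q -> Prop :=
  fun q => forall H : Q -> Prop, mfilter Q H ->
    (forall x, F x -> H x) -> (forall x, G x -> H x) -> H q.

Section Localization.
Variables (Q : QStruct) (F : Q -> Prop) (M : MStruct Q).

Definition prec1 (a b : M) : Prop :=
  exists (I : Type) (ai : I -> M) (si : I -> Q),
    inhabited I /\
    mle M a (msup M (fun x => exists i, x = ai i)) /\
    (forall i, F (si i) /\ mle M (act M (si i) (ai i)) b).

(** a ⪯^n_F b  (chains of n steps of ⪯^1_F, n >= 1; n = 0 is never used) *)
Fixpoint precn (n : nat) (a b : M) : Prop :=
  match n with
  | O => False
  | S O => prec1 a b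
  | S m => exists c, prec1 a c /\ precn m c b
  end.

Definition prec (a b : M) : Prop := exists n, precn n a b.

Definition loc_equiv (a b : M) : Prop := prec a b /\ prec b a.

Definition localizable : Prop :=
  forall b : M, exists nb : nat, forall a : M, prec a b -> precn nb a b.

(** The quotient M_F: equivalence classes (as predicates). *)
Definition LocC : Type := { C : M -> Prop | exists a, C = loc_equiv a }.

Definition cls (a : M) : LocC := exist _ (loc_equiv a) (ex_intro _ a eq_refl).

Definition rep (C : LocC) : M :=
  proj1_sig (constructive_indefinite_description _ (proj2_sig C)).

Definition loc_le (C D : LocC) : Prop := prec (rep C) (rep D).

Definition loc_sup (S : LocC -> Prop) : LocC :=
  cls (msup M (fun x => exists C, S C /\ x = rep C)).

Definition loc_act (q : Q) (C : LocC) : LocC := cls (act M q (rep C)).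

Definition loc : MStruct Q := mkMStruct loc_le loc_sup loc_act.

Definition lcls (a : M) : loc := cls a.

End Localization.

Definition is_module_iso (Q : QStruct) (M N : MStruct Q) (f : M -> N) : Prop :=
  (exists g : N -> M, (forall x, g (f x) = x) /\ (forall y, f (g y) = y)) /\
  (forall x y : M, mle M x y <-> mle N (f x) (f y)) /\
  (forall S : M -> Prop, nonempty S -> f (msup M S) = msup N (image f S)) /\
  (forall (q : Q) (x : M), f (act M q x) = act N q (f x)).
Arguments mfilter_sum : clear implicits.

From Stdlib Require Import IndefiniteDescription ProofIrrelevance FunctionalExtensionality PropExtensionality.

Set Implicit Arguments.
Unset Strict Implicit.

(** For classes [C], [D] of [M_F], a [G]-step [C ⪯^1_G D] in [M_F] unfolds into an
    [(F+G)]-chain between representatives, because [F]-steps and [G]-steps are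
    both [(F+G)]-steps. Conversely every element of [F+G] lies above a product
    [f g] with [f ∈ F], [g ∈ G], so an [(F+G)]-step [x ⪯^1 y] in [M] becomes the
    [G]-step [x̄ ⪯^1 ȳ] in [M_F] (the factor [f] disappears in [M_F], where
    [g a ⪯_F f g a]). Hence [C ⪯_G D] iff [rep C ⪯_(F+G) rep D], and the descent
    preserves chain lengths, so [G] inherits the bounds [n_b] of [F+G]; the two
    quotients identify the same pairs, which gives the isomorphism; joins and
    the action are computed on representatives in both, the joins being
    well defined thanks to localizability. *)

Section Chains.
Variable Q : QStruct.
Implicit Types K L : Q -> Prop.

Lemma precn_cons K (N : MStruct Q) n (a c b : N) :
  prec1 K a c -> precn K n c b -> precn K (S n) a b.
Proof. intros H1 H2. destruct n as [|n]; [destruct H2|]. exists c. split; assumption. Qed.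

Lemma precn_inv K (N : MStruct Q) n (a b : N) : precn K (S n) a b ->
  (n = 0 /\ prec1 K a b) \/ exists c, prec1 K a c /\ precn K n c b.
Proof. intro H. destruct n as [|n]; [left; split; [reflexivity|exact H] | right; exact H]. Qed.

Lemma precn_map K L (N N' : MStruct Q) (f : N -> N') :
  (forall a b, prec1 K a b -> prec1 L (f a) (f b)) ->
  forall n a b, precn K n a b -> precn L n (f a) (f b).
Proof.
  intros Hf n. induction n as [|n IH]; intros a b Hab; [destruct Hab|].
  apply precn_inv in Hab. destruct Hab as [[-> Hab] | [c [Hac Hcb]]].
  - exact (Hf a b Hab).
  - apply precn_cons with (f c); auto.
Qed.

Lemma precn_collapse K (N : MStruct Q) (R : N -> N -> Prop) :
  (forall a b c, R a b -> R b c -> R a c) -> (forall a b, prec1 K a b -> R a b) ->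
  forall n a b, precn K n a b -> R a b.
Proof.
  intros Rtrans H1 n. induction n as [|n IH]; intros a b Hab; [destruct Hab|].
  apply precn_inv in Hab. destruct Hab as [[-> Hab] | [c [Hac Hcb]]]; eauto.
Qed.

Lemma precn_app K (N : MStruct Q) n m (a b c : N) :
  precn K n a b -> precn K m b c -> precn K (n + m) a c.
Proof.
  revert a. induction n as [|n IH]; intros a Hab Hbc; [destruct Hab|].
  apply precn_inv in Hab. destruct Hab as [[-> Hab] | [d [Had Hdb]]].
  - apply precn_cons with b; assumption.
  - apply precn_cons with d; auto.
Qed.

Lemma prec_trans K (N : MStruct Q) (a b c : N) : prec K a b -> prec K b c -> prec K a c.
Proof. intros [n Hab] [m Hbc]. exists (n + m). eapply precn_app; eauto. Qed.

Lemma prec_mono K L (N : MStruct Q) (a b : N) :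
  (forall q, K q -> L q) -> prec K a b -> prec L a b.
Proof.
  intros HKL [n Hab]. exists n. revert n a b Hab. apply precn_map.
  intros a b (I & ai & si & Hi & Ha & Hs). exists I, ai, si.
  split; [exact Hi | split; [exact Ha | intro i; destruct (Hs i); split; auto]].
Qed.

Lemma loc_equiv_sym K (N : MStruct Q) (a b : N) : loc_equiv K a b -> loc_equiv K b a.
Proof. intros [Hab Hba]; split; assumption. Qed.

Lemma loc_equiv_trans K (N : MStruct Q) (a b c : N) :
  loc_equiv K a b -> loc_equiv K b c -> loc_equiv K a c.
Proof. intros [Hab Hba] [Hbc Hcb]; split; eapply prec_trans; eauto. Qed.

Lemma loc_equiv_mono K L (N : MStruct Q) (a b : N) :
  (forall q, K q -> L q) -> loc_equiv K a b -> loc_equiv L a b.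
Proof. intros HKL [Hab Hba]; split; eapply prec_mono; eauto. Qed.

Lemma rep_spec K (N : MStruct Q) (C : LocC K N) : proj1_sig C = loc_equiv K (rep C).
Proof. unfold rep. destruct (constructive_indefinite_description _ _) as [a Ha]. exact Ha. Qed.

Lemma cls_rep K (N : MStruct Q) (C : LocC K N) : cls K (rep C) = C.
Proof.
  pose proof (rep_spec C) as HC. destruct C as [P HP]. simpl in HC.
  apply subset_eq_compat. symmetry. exact HC.
Qed.

Lemma rep_cls K (N : MStruct Q) (a : N) : prec K a a -> loc_equiv K (rep (cls K a)) a.
Proof.
  intro Haa. pose proof (f_equal (fun P : N -> Prop => P a) (rep_spec (cls K a))) as E.
  simpl in E. rewrite <- E. split; exact Haa.
Qed.

Lemma cls_eq K (N : MStruct Q) (a b : N) : loc_equiv K a b -> cls K a = cls K b.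
Proof.
  intro Hab. apply subset_eq_compat, functional_extensionality. intro c.
  apply propositional_extensionality. split; intro Hc.
  - exact (loc_equiv_trans (loc_equiv_sym Hab) Hc).
  - exact (loc_equiv_trans Hab Hc).
Qed.

End Chains.

Section Module.
Variables (Q : QStruct) (M : MStruct Q).
Hypotheses (HQ : is_quantale Q) (HM : is_module M).
Implicit Types K : Q -> Prop.

Lemma qle_refl x : qle Q x x. Proof. apply HQ. Qed.
Lemma qle_antisym x y : qle Q x y -> qle Q y x -> x = y. Proof. apply HQ. Qed.
Lemma qle_trans x y z : qle Q x y -> qle Q y z -> qle Q x z. Proof. apply HQ. Qed.
Lemma qsup_ub (S : Q -> Prop) x : S x -> qle Q x (qsup Q S).
Proof. intro Sx. exact (proj1 (proj1 (proj2 HQ) S (ex_intro _ x Sx)) x Sx). Qed.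
Lemma qsup_least (S : Q -> Prop) u :
  nonempty S -> (forall x, S x -> qle Q x u) -> qle Q (qsup Q S) u.
Proof. intro S0. exact (proj2 (proj1 (proj2 HQ) S S0) u). Qed.
Lemma qmulC a b : qmul Q a b = qmul Q b a. Proof. apply HQ. Qed.
Lemma qmulA a b c : qmul Q a (qmul Q b c) = qmul Q (qmul Q a b) c. Proof. apply HQ. Qed.
Lemma qmul1 a : qmul Q (qone Q) a = a. Proof. apply HQ. Qed.
Lemma qmul_qsup a (S : Q -> Prop) :
  nonempty S -> qmul Q a (qsup Q S) = qsup Q (image (qmul Q a) S).
Proof. apply HQ. Qed.

Lemma mle_refl x : mle M x x. Proof. apply HM. Qed.
Lemma mle_antisym x y : mle M x y -> mle M y x -> x = y. Proof. apply HM. Qed.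
Lemma mle_trans x y z : mle M x y -> mle M y z -> mle M x z. Proof. apply HM. Qed.
Lemma msup_ub (S : M -> Prop) x : S x -> mle M x (msup M S).
Proof. intro Sx. exact (proj1 (proj1 (proj2 HM) S (ex_intro _ x Sx)) x Sx). Qed.
Lemma msup_least (S : M -> Prop) u :
  nonempty S -> (forall x, S x -> mle M x u) -> mle M (msup M S) u.
Proof. intro S0. exact (proj2 (proj1 (proj2 HM) S S0) u). Qed.
Lemma actA p q m : act M p (act M q m) = act M (qmul Q p q) m. Proof. apply HM. Qed.
Lemma act1 m : act M (qone Q) m = m. Proof. apply HM. Qed.
Lemma act_qsup (S : Q -> Prop) m :
  nonempty S -> act M (qsup Q S) m = msup M (image (fun s => act M s m) S).
Proof. apply HM. Qed.
Lemma act_msup q (T : M -> Prop) :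
  nonempty T -> act M q (msup M T) = msup M (image (act M q) T).
Proof. apply HM. Qed.

Lemma qsup_pair_le x y : qle Q x y -> qsup Q (fun z => z = x \/ z = y) = y.
Proof.
  intro Hxy. apply qle_antisym.
  - apply qsup_least; [exists x; auto|]. intros z [-> | ->]; [exact Hxy | apply qle_refl].
  - apply qsup_ub. auto.
Qed.

Lemma msup_pair_le x y : mle M x y -> msup M (fun z => z = x \/ z = y) = y.
Proof.
  intro Hxy. apply mle_antisym.
  - apply msup_least; [exists x; auto|]. intros z [-> | ->]; [exact Hxy | apply mle_refl].
  - apply msup_ub. auto.
Qed.

Lemma qmul_mono_r c a b : qle Q a b -> qle Q (qmul Q c a) (qmul Q c b).
Proof.
  intro Hab. rewrite <- (qsup_pair_le Hab), qmul_qsup by (exists a; auto).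
  apply qsup_ub. exists a; auto.
Qed.

Lemma qmul_mono a b c d : qle Q a b -> qle Q c d -> qle Q (qmul Q a c) (qmul Q b d).
Proof.
  intros Hab Hcd. apply qle_trans with (qmul Q a d); [exact (qmul_mono_r a Hcd)|].
  rewrite (qmulC a d), (qmulC b d). exact (qmul_mono_r d Hab).
Qed.

Lemma qmulACA a b c d :
  qmul Q (qmul Q a b) (qmul Q c d) = qmul Q (qmul Q a c) (qmul Q b d).
Proof. rewrite <- !qmulA, (qmulA b c d), (qmulC b c), <- (qmulA c b d). reflexivity. Qed.

Lemma act_mono_r q x y : mle M x y -> mle M (act M q x) (act M q y).
Proof.
  intro Hxy. rewrite <- (msup_pair_le Hxy), act_msup by (exists x; auto).
  apply msup_ub. exists x; auto.
Qed.

Lemma act_mono_l p q a : qle Q p q -> mle M (act M p a) (act M q a).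
Proof.
  intro Hpq. rewrite <- (qsup_pair_le Hpq), act_qsup by (exists p; auto).
  apply msup_ub. exists p; auto.
Qed.

Lemma act_comm p q x : act M p (act M q x) = act M q (act M p x).
Proof. rewrite !actA, qmulC. reflexivity. Qed.

Lemma prec1_of_act_le K k (a b : M) : K k -> mle M (act M k a) b -> prec1 K a b.
Proof.
  intros Kk Hle. exists unit, (fun _ => a), (fun _ => k).
  split; [constructor; exact tt|]. split.
  - apply msup_ub. exists tt; reflexivity.
  - intros _. split; assumption.
Qed.

Lemma prec1_act_r K k (x : M) : K k -> prec1 K x (act M k x).
Proof. intro Kk. apply prec1_of_act_le with k; [exact Kk | apply mle_refl]. Qed.

Lemma prec_of_mle K (a b : M) : K (qone Q) -> mle M a b -> prec K a b.
Proof. intros K1 Hab. exists 1. apply prec1_of_act_le with (qone Q); [exact K1|]. rewrite act1; exact Hab. Qed.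

Lemma prec_refl K (a : M) : K (qone Q) -> prec K a a.
Proof. intro K1. apply prec_of_mle; [exact K1 | apply mle_refl]. Qed.

Lemma rep_cls_equiv K (a : M) : K (qone Q) -> loc_equiv K (rep (cls K a)) a.
Proof. intro K1. apply rep_cls, prec_refl, K1. Qed.

Lemma prec1_act K q (a b : M) : prec1 K a b -> prec1 K (act M q a) (act M q b).
Proof.
  intros (I & ai & si & [i0] & Ha & Hs).
  exists I, (fun i => act M q (ai i)), si. split; [constructor; exact i0|]. split.
  - apply mle_trans with (act M q (msup M (fun x => exists i, x = ai i))); [exact (act_mono_r q Ha)|].
    rewrite act_msup by (exists (ai i0), i0; reflexivity).
    apply msup_least; [exists (act M q (ai i0)), (ai i0); split; [exists i0|]; reflexivity|].
    intros y (x & (i & ->) & ->). apply msup_ub. exists i; reflexivity.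
  - intro i. destruct (Hs i) as [Ks Hle]. split; [exact Ks|].
    rewrite act_comm. exact (act_mono_r q Hle).
Qed.

Lemma prec_act K q (a b : M) : prec K a b -> prec K (act M q a) (act M q b).
Proof. intros [n Hab]. exists n. revert n a b Hab. apply precn_map, prec1_act. Qed.

Lemma prec1_mle_trans K (a c d : M) : prec1 K a c -> mle M c d -> prec1 K a d.
Proof.
  intros (I & ai & si & Hi & Ha & Hs) Hcd. exists I, ai, si. split; [exact Hi|]. split; [exact Ha|].
  intro i. destruct (Hs i) as [Ks Hle]. split; [exact Ks | exact (mle_trans Hle Hcd)].
Qed.

Lemma prec1_msup_l K (X : M -> Prop) d :
  nonempty X -> (forall x, X x -> prec1 K x d) -> prec1 K (msup M X) d.
Proof.
  intros [x0 Xx0] HX.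
  pose (J := {p : M * Q | K (snd p) /\ mle M (act M (snd p) (fst p)) d}).
  exists J, (fun p : J => fst (proj1_sig p)), (fun p : J => snd (proj1_sig p)). split; [|split].
  - destruct (HX x0 Xx0) as (I & ai & si & [i0] & _ & Hs).
    constructor. exists (ai i0, si i0). exact (Hs i0).
  - apply msup_least; [exists x0; exact Xx0|]. intros x Xx.
    destruct (HX x Xx) as (I & ai & si & [i0] & Ha & Hs).
    apply (mle_trans Ha). apply msup_least; [exists (ai i0), i0; reflexivity|].
    intros y [i ->]. apply msup_ub. exists (exist _ (ai i, si i) (Hs i)). reflexivity.
  - intros [[a s] Hp]. exact Hp.
Qed.

(* [msup X] reaches in one step the join of the second points of all the chains,
   to which the induction hypothesis applies. *)
Lemma precn_msup_l K b n : forall X : M -> Prop,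
  nonempty X -> (forall x, X x -> precn K n x b) -> precn K n (msup M X) b.
Proof.
  induction n as [|n IH]; intros X [x0 Xx0] HX; [destruct (HX x0 Xx0)|].
  destruct n as [|n]; [apply prec1_msup_l; [exists x0; exact Xx0 | exact HX]|].
  pose (C := fun c => precn K (S n) c b /\ exists x, X x /\ prec1 K x c).
  apply precn_cons with (msup M C).
  - apply prec1_msup_l; [exists x0; exact Xx0|]. intros x Xx.
    destruct (HX x Xx) as [c [Hxc Hcb]]. apply prec1_mle_trans with c; [exact Hxc|].
    apply msup_ub. split; [exact Hcb | exists x; split; assumption].
  - apply IH; [| intros c [Hcb _]; exact Hcb].
    destruct (HX x0 Xx0) as [c [Hxc Hcb]]. exists c. split; [exact Hcb | exists x0; split; assumption].
Qed.

Lemma prec_msup_l K (X : M -> Prop) b : localizable K M ->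
  nonempty X -> (forall x, X x -> prec K x b) -> prec K (msup M X) b.
Proof.
  intros LK X0 HX. destruct (LK b) as [n Hn]. exists n.
  apply precn_msup_l; [exact X0|]. intros x Xx. exact (Hn x (HX x Xx)).
Qed.

Lemma prec_msup K (A B : M -> Prop) : localizable K M -> K (qone Q) -> nonempty A ->
  (forall a, A a -> exists b, B b /\ prec K a b) -> prec K (msup M A) (msup M B).
Proof.
  intros LK K1 A0 HAB. apply prec_msup_l; [exact LK | exact A0|].
  intros a Aa. destruct (HAB a Aa) as [b [Bb Hab]]. apply (prec_trans Hab).
  apply prec_of_mle; [exact K1 | apply msup_ub; exact Bb].
Qed.
End Module.

Section FilterSum.
Variables (Q : QStruct) (F G : Q -> Prop).

Lemma mfilter_one : mfilter Q F -> F (qone Q).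
Proof. intros [F1 _]. exact F1. Qed.

Lemma mfilter_sum_l q : F q -> mfilter_sum Q F G q.
Proof. intros Fq H _ HFH _. exact (HFH q Fq). Qed.

Lemma mfilter_sum_r q : G q -> mfilter_sum Q F G q.
Proof. intros Gq H _ _ HGH. exact (HGH q Gq). Qed.

Lemma mfilter_sum_decomp h : is_quantale Q -> mfilter Q F -> mfilter Q G ->
  mfilter_sum Q F G h -> exists f g, F f /\ G g /\ qle Q (qmul Q f g) h.
Proof.
  intros HQ [F1 [Fup Fmul]] [G1 [Gup Gmul]] Hh.
  apply (Hh (fun q => exists f g, F f /\ G g /\ qle Q (qmul Q f g) q)); [split; [|split]|..].
  - exists (qone Q), (qone Q). rewrite (qmul1 HQ). split; [|split]; [exact F1 | exact G1 | apply (qle_refl HQ)].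
  - intros a b (f & g & Ff & Gg & Hle) Hab. exists f, g. split; [|split]; [exact Ff | exact Gg | exact (qle_trans HQ Hle Hab)].
  - intros a b (f1 & g1 & Ff1 & Gg1 & Hle1) (f2 & g2 & Ff2 & Gg2 & Hle2).
    exists (qmul Q f1 f2), (qmul Q g1 g2). split; [|split]; [auto | auto|].
    rewrite <- (qmulACA HQ). exact (qmul_mono HQ Hle1 Hle2).
  - intros f Ff. exists f, (qone Q). rewrite (qmulC HQ), (qmul1 HQ).
    split; [|split]; [exact Ff | exact G1 | apply (qle_refl HQ)].
  - intros g Gg. exists (qone Q), g. rewrite (qmul1 HQ).
    split; [|split]; [exact F1 | exact Gg | apply (qle_refl HQ)].
Qed.
End FilterSum.

Section Iterated.
Variables (Q : QStruct) (M : MStruct Q) (F G : Q -> Prop).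
Hypotheses (HQ : is_quantale Q) (HM : is_module M) (HF : mfilter Q F) (HG : mfilter Q G).
Hypotheses (LF : localizable F M) (LH : localizable (mfilter_sum Q F G) M).

Local Notation H := (mfilter_sum Q F G).
Local Notation MF := (loc F M).

Let F1 : F (qone Q) := mfilter_one HF.
Let H1 : H (qone Q) := @mfilter_sum_l Q F G _ F1.
Let FH q : F q -> H q := @mfilter_sum_l Q F G q.
Let GH q : G q -> H q := @mfilter_sum_r Q F G q.

Let repF (x : M) : loc_equiv F (rep (cls F x)) x := rep_cls_equiv HM x F1.

Lemma prec1_loc_to_sum (C D : MF) : prec1 G C D -> prec H (rep C) (rep D).
Proof.
  intros (I & ai & si & [i0] & Ha & Hs).
  set (X := fun x => exists E, (exists i, E = ai i) /\ x = rep E).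
  apply prec_trans with (msup M X).
  - apply (prec_mono FH). apply (prec_trans Ha), repF.
  - apply (prec_msup_l HM LH); [exists (rep (ai i0)), (ai i0); split; [exists i0|]; reflexivity|].
    intros x (E & (i & ->) & ->). destruct (Hs i) as [Gs Hle].
    apply prec_trans with (act M (si i) (rep (ai i))).
    + exists 1. apply (prec1_act_r HM), GH, Gs.
    + apply (prec_mono FH), (prec_trans (proj2 (repF _))), Hle.
Qed.

Lemma prec1_sum_to_loc (x y : M) : prec1 H x y -> prec1 G (lcls F x) (lcls F y).
Proof.
  intros (I & ai & si & Hi & Ha & Hs).
  assert (Hd : forall i, exists g, G g /\ exists f, F f /\ qle Q (qmul Q f g) (si i)).
  { intro i. destruct (mfilter_sum_decomp HQ HF HG (proj1 (Hs i))) as (f & g & Ff & Gg & Hle).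
    eauto. }
  destruct (functional_choice _ Hd) as [g Hg].
  exists I, (fun i => lcls F (ai i)), g. split; [exact Hi | split].
  - apply (prec_trans (proj1 (repF x))), (prec_trans (prec_of_mle HM F1 Ha)).
    apply (fun h => prec_trans h (proj2 (repF _))).
    destruct Hi as [i0]. apply (prec_msup HM LF F1); [exists (ai i0), i0; reflexivity|].
    intros a [i ->]. exists (rep (lcls F (ai i))).
    split; [exists (lcls F (ai i)); split; [exists i|]; reflexivity | exact (proj2 (repF _))].
  - intro i. destruct (Hg i) as [Gg [f [Ff Hle]]]. split; [exact Gg|].
    apply (prec_trans (proj1 (repF _))), (prec_trans (prec_act HQ HM (g i) (proj1 (repF _)))).
    apply (fun h => prec_trans h (proj2 (repF _))).
    exists 1. apply (prec1_of_act_le HM) with f; [exact Ff|].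
    rewrite (actA HM). exact (mle_trans HM (act_mono_l HQ HM _ Hle) (proj2 (Hs i))).
Qed.

Lemma prec_loc_to_sum (C D : MF) : prec G C D -> prec H (rep C) (rep D).
Proof.
  intros [n HCD]. revert n C D HCD.
  apply (precn_collapse (R := fun C D : MF => prec H (rep C) (rep D))).
  - intros C D E. apply prec_trans.
  - exact prec1_loc_to_sum.
Qed.

Lemma precn_sum_to_loc n (x y : M) : precn H n x y -> precn G n (lcls F x) (lcls F y).
Proof. revert n x y. apply precn_map, prec1_sum_to_loc. Qed.

Lemma prec_loc_iff (C D : MF) : prec G C D <-> prec H (rep C) (rep D).
Proof.
  split; [exact (prec_loc_to_sum (D:=D))|]. intros [n HCD]. exists n.
  rewrite <- (cls_rep C), <- (cls_rep D). exact (precn_sum_to_loc HCD).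
Qed.

Lemma localizable_loc : localizable G MF.
Proof.
  intro D. destruct (LH (rep D)) as [n Hn]. exists n. intros C HCD.
  rewrite <- (cls_rep C), <- (cls_rep D). exact (precn_sum_to_loc (Hn _ (prec_loc_to_sum HCD))).
Qed.

Lemma loc_equiv_loc_to_sum (C D : MF) : loc_equiv G C D -> loc_equiv H (rep C) (rep D).
Proof. intros [HCD HDC]; split; apply prec_loc_iff; assumption. Qed.

Lemma lcls_iter_eq (a b : M) : loc_equiv H a b -> lcls G (lcls F a) = lcls G (lcls F b).
Proof.
  intro Hab. apply cls_eq.
  assert (E : loc_equiv H (rep (lcls F a)) (rep (lcls F b))).
  { apply (loc_equiv_trans (loc_equiv_mono FH (repF a))), (loc_equiv_trans Hab).
    exact (loc_equiv_sym (loc_equiv_mono FH (repF b))). }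
  destruct E as [Eab Eba]. split; apply prec_loc_iff; assumption.
Qed.

Definition loc_sum_to_iter (C : loc H M) : loc G MF := lcls G (lcls F (rep C)).
Local Notation phi := loc_sum_to_iter.

Lemma loc_sum_to_iter_lcls (x : M) : phi (lcls H x) = lcls G (lcls F x).
Proof. apply lcls_iter_eq, (rep_cls_equiv HM x H1). Qed.

Lemma rep_loc_sum_to_iter (C : loc H M) : loc_equiv H (rep (rep (phi C))) (rep C).
Proof.
  assert (HG1 : prec G (lcls F (rep C)) (lcls F (rep C))).
  { apply prec_loc_iff, (prec_refl HM _ H1). }
  apply (loc_equiv_trans (loc_equiv_loc_to_sum (rep_cls HG1))), (loc_equiv_mono FH (repF _)).
Qed.

Lemma loc_sum_to_iter_bij : exists psi : loc G MF -> loc H M,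
  (forall C, psi (phi C) = C) /\ (forall E, phi (psi E) = E).
Proof.
  exists (fun E : loc G MF => lcls H (rep (rep E))). split.
  - intro C. rewrite <- (cls_rep C) at 2. apply cls_eq, rep_loc_sum_to_iter.
  - intro E. rewrite loc_sum_to_iter_lcls. unfold lcls. rewrite !cls_rep. reflexivity.
Qed.

Lemma loc_sum_to_iter_mle (C D : loc H M) :
  mle (loc H M) C D <-> mle (loc G MF) (phi C) (phi D).
Proof.
  change (prec H (rep C) (rep D) <-> prec G (rep (phi C)) (rep (phi D))).
  rewrite prec_loc_iff.
  destruct (rep_loc_sum_to_iter C) as [C1 C2], (rep_loc_sum_to_iter D) as [D1 D2].
  split; intro HCD.
  - apply (prec_trans C1), (prec_trans HCD), D2.
  - apply (prec_trans C2), (prec_trans HCD), D1.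
Qed.

Lemma loc_sum_to_iter_act q (C : loc H M) : phi (act (loc H M) q C) = act (loc G MF) q (phi C).
Proof.
  change (phi (lcls H (act M q (rep C))) = lcls G (lcls F (act M q (rep (rep (phi C)))))).
  rewrite loc_sum_to_iter_lcls. apply lcls_iter_eq.
  destruct (rep_loc_sum_to_iter C) as [C1 C2]. split; apply (prec_act HQ HM); assumption.
Qed.

Lemma loc_sum_to_iter_msup (S : loc H M -> Prop) :
  nonempty S -> phi (msup (loc H M) S) = msup (loc G MF) (image phi S).
Proof.
  intros [C0 SC0].
  set (A := fun x : M => exists C, S C /\ x = rep C).
  set (B := fun x : M => exists E : MF, (exists E', image phi S E' /\ E = rep E') /\ x = rep E).
  change (phi (lcls H (msup M A)) = lcls G (lcls F (msup M B))).
  assert (AS : forall C, S C -> A (rep C)) by (intros C SC; exists C; split; [exact SC | reflexivity]).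
  assert (BS : forall C, S C -> B (rep (rep (phi C)))).
  { intros C SC. exists (rep (phi C)). split; [|reflexivity].
    exists (phi C). split; [exists C; split; [exact SC|]|]; reflexivity. }
  rewrite loc_sum_to_iter_lcls. apply lcls_iter_eq. split; apply (prec_msup HM LH H1).
  - exists (rep C0). exact (AS C0 SC0).
  - intros a (C & SC & ->). exists (rep (rep (phi C))).
    split; [exact (BS C SC) | apply rep_loc_sum_to_iter].
  - exists (rep (rep (phi C0))). exact (BS C0 SC0).
  - intros b (E & (E' & (C & SC & ->) & ->) & ->). exists (rep C).
    split; [exact (AS C SC) | apply rep_loc_sum_to_iter].
Qed.

Lemma loc_sum_to_iter_iso : is_module_iso loc_sum_to_iter.
Proof.
  split; [exact loc_sum_to_iter_bij|].
  split; [exact loc_sum_to_iter_mle|].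
  split; [exact loc_sum_to_iter_msup | exact loc_sum_to_iter_act].
Qed.
End Iterated.

Theorem mainTheorem2 (Q : QStruct) (M : MStruct Q) (F G : Q -> Prop) :
  is_quantale Q -> is_module M -> mfilter Q F -> mfilter Q G ->
  localizable F M -> localizable (mfilter_sum Q F G) M ->
  localizable G (loc F M) /\
  exists phi : loc (mfilter_sum Q F G) M -> loc G (loc F M),
    (forall x : M, phi (lcls (mfilter_sum Q F G) x) = lcls G (lcls F x)) /\
    is_module_iso phi.
Proof.
  intros HQ HM HF HG LF LH. split.
  - exact (localizable_loc HQ HM HF HG LF LH).
  - exists (@loc_sum_to_iter Q M F G). split.
    + exact (loc_sum_to_iter_lcls HQ HM HF HG LF LH).
    + exact (loc_sum_to_iter_iso HQ HM HF HG LF LH).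
Qed.
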